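(* Let $\mathcal F$ be an $F$-category, $\mathcal C=\mathcal F^{(0)}$ its full subcategory of connected objects, $\jmath:\mathcal C\hookrightarrow\mathcal F$ the inclusion, and $J$ a Grothendieck topology on $\mathcal C$. A presheaf of sets $G$ on $\mathcal F$ is a sheaf for $\jmath_*J$ if and only if (a) its restriction to $\mathcal C$ is a $J$-sheaf, (b) $G(\emptyset)$ is a one-point set for an initial object $\emptyset$, and (c) for every finite family $(N_i)_{i\in I}$ of objects, the maps induced by the coprojections give a bijection $G(\coprod_i N_i)\to\prod_i G(N_i)$.
   Context: An object $Y$ of a category with initial object and finite coproducts is connected if for every finite family $(N_i)_{i\in I}$ the natural map $\coprod_i\operatorname{Hom}(Y,N_i)\to\operatorname{Hom}(Y,\coprod_iN_i)$ is bijective. An $F$-category is a category having an initial object and finite coproducts in which every object is isomorphic to a finite coproduct of connected objects. For a functor $F:\mathcal C\to\mathcal D$ and a topology $J$ on $\mathcal C$, the pushforward topology $F_*J$ on $\mathcal D$ is the finest topology making $F$ cocontinuous; explicitly, a sieve $R$ on $X\in\mathcal D$ is $F_*J$-covering iff for every object $Y$ of $\mathcal C$ and every morphism $f:F(Y)\to X$, the sieve $\{g:Z\to Y : f\circ F(g)\in R\}$ on $Y$ belongs to $J(Y)$. *)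

From mathcomp Require Import all_boot.
Set Implicit Arguments.
Unset Strict Implicit.
Unset Printing Implicit Defensive.

Record Category := {
  Obj :> Type;
  Hom : Obj -> Obj -> Type;
  idm : forall X, Hom X X;
  comp : forall X Y Z, Hom Y Z -> Hom X Y -> Hom X Z;
  comp_idl : forall X Y (f : Hom X Y), comp (idm Y) f = f;
  comp_idr : forall X Y (f : Hom X Y), comp f (idm X) = f;
  comp_assoc : forall X Y Z W (h : Hom Z W) (g : Hom Y Z) (f : Hom X Y),
      comp h (comp g f) = comp (comp h g) f
}.
Arguments Hom {c}.
Arguments idm {c}.
Arguments comp {c X Y Z}.

Record Functor (C D : Category) := {
  fobj :> C -> D;
  fmap : forall X Y : C, Hom X Y -> Hom (fobj X) (fobj Y);
  fmap_id : forall X, fmap (idm X) = idm (fobj X);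
  fmap_comp : forall X Y Z (g : Hom Y Z) (f : Hom X Y),
      fmap (comp g f) = comp (fmap g) (fmap f)
}.
Arguments fmap {C D} f {X Y} : rename.

Definition full_subcat (C : Category) (P : C -> Prop) : Category :=
  {| Obj := {X : C | P X};
     Hom := fun X Y => Hom (proj1_sig X) (proj1_sig Y);
     idm := fun X => idm (proj1_sig X);
     comp := fun X Y Z g f => comp g f;
     comp_idl := fun X Y f => comp_idl f;
     comp_idr := fun X Y f => comp_idr f;
     comp_assoc := fun X Y Z W h g f => comp_assoc h g f |}.

Definition incl_functor (C : Category) (P : C -> Prop) :
  Functor (full_subcat P) C :=
  {| fobj := fun X : full_subcat P => proj1_sig X;
     fmap := fun (X Y : full_subcat P) (f : Hom X Y) => f;
     fmap_id := fun X => erefl;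
     fmap_comp := fun X Y Z g f => erefl |}.

Record Presheaf (C : Category) := {
  pobj :> C -> Type;
  psh_map : forall X Y : C, Hom X Y -> pobj Y -> pobj X;
  psh_map_id : forall X (x : pobj X), psh_map (idm X) x = x;
  psh_map_comp : forall X Y Z (g : Hom Y Z) (f : Hom X Y) (x : pobj Z),
      psh_map (comp g f) x = psh_map f (psh_map g x)
}.
Arguments psh_map {C} p {X Y} : rename.

Definition presheaf_restrict (C D : Category) (F : Functor C D)
  (G : Presheaf D) : Presheaf C.
Proof.
refine {| pobj := fun X => G (F X);
          psh_map := fun X Y f x => psh_map G (fmap F f) x |}.
- by move=> X x; rewrite fmap_id psh_map_id.
- by move=> X Y Z g f x; rewrite fmap_comp psh_map_comp.
Defined.

Definition sieve_pred (C : Category) (X : C) := forall Y : C, Hom Y X -> Prop.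

Definition is_sieve (C : Category) (X : C) (S : sieve_pred X) : Prop :=
  forall Y Z (f : Hom Y X) (g : Hom Z Y), S Y f -> S Z (comp f g).

Definition maximal_sieve (C : Category) (X : C) : sieve_pred X :=
  fun _ _ => True.

Definition sieve_pullback (C : Category) (X Y : C) (S : sieve_pred X)
  (h : Hom Y X) : sieve_pred Y := fun Z g => S Z (comp h g).

Definition is_topology (C : Category) (J : forall X : C, sieve_pred X -> Prop)
  : Prop :=
  [/\ (forall X S, J X S -> is_sieve S),
      (forall X, J X (@maximal_sieve C X)),
      (forall X Y S (h : Hom Y X), J X S -> J Y (sieve_pullback S h)) &
      (forall X S R, J X S -> is_sieve R ->
          (forall Y (h : Hom Y X), S Y h -> J Y (sieve_pullback R h)) ->
          J X R)].

(* pushforward topology F_* J, by the explicit description *)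
Definition pushforward_top (C D : Category) (F : Functor C D)
  (J : forall X : C, sieve_pred X -> Prop) :
  forall X : D, sieve_pred X -> Prop :=
  fun X R => is_sieve R /\
    forall (Y : C) (f : Hom (F Y) X),
      J Y (fun Z (g : Hom Z Y) => R (F Z) (comp f (fmap F g))).

Definition is_sheaf (C : Category) (K : forall X : C, sieve_pred X -> Prop)
  (G : Presheaf C) : Prop :=
  forall (X : C) (S : sieve_pred X), K X S ->
  forall x : (forall Y (f : Hom Y X), S Y f -> G Y),
    (forall Y (f : Hom Y X) (hf : S Y f) Z (g : Hom Z Y)
            (hfg : S Z (comp f g)),
        x Z (comp f g) hfg = psh_map G g (x Y f hf)) ->
    exists a : G X,
      (forall Y (f : Hom Y X) (hf : S Y f), psh_map G f a = x Y f hf) /\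
      (forall b : G X,
         (forall Y (f : Hom Y X) (hf : S Y f), psh_map G f b = x Y f hf) ->
         b = a).

Definition is_initial (C : Category) (E : C) : Prop :=
  forall X : C, exists f : Hom E X, forall g : Hom E X, g = f.

Definition is_coproduct (C : Category) (I : finType) (N : I -> C) (S : C)
  (iota : forall i, Hom (N i) S) : Prop :=
  forall (X : C) (f : forall i, Hom (N i) X),
    exists h : Hom S X,
      (forall i, comp h (iota i) = f i) /\
      (forall h' : Hom S X, (forall i, comp h' (iota i) = f i) -> h' = h).

Definition has_initial (C : Category) : Prop := exists E : C, is_initial E.

Definition has_finite_coproducts (C : Category) : Prop :=
  forall (I : finType) (N : I -> C),
    exists (S : C) (iota : forall i, Hom (N i) S), is_coproduct iota.

Definition connected (C : Category) (Y : C) : Prop :=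
  forall (I : finType) (N : I -> C) (S : C) (iota : forall i, Hom (N i) S),
    is_coproduct iota ->
    bijective (fun p : {i : I & Hom Y (N i)} => comp (iota (projT1 p)) (projT2 p)).

Definition isomorphic (C : Category) (X Y : C) : Prop :=
  exists (f : Hom X Y) (g : Hom Y X), comp g f = idm X /\ comp f g = idm Y.

Definition is_Fcategory (C : Category) : Prop :=
  [/\ has_initial C, has_finite_coproducts C &
      forall X : C, exists (I : finType) (N : I -> C) (S : C)
                           (iota : forall i, Hom (N i) S),
        [/\ is_coproduct iota, forall i, connected (N i) & isomorphic S X]].

Definition connSub (C : Category) : Category := full_subcat (@connected C).
Definition connIncl (C : Category) : Functor (connSub C) C :=
  incl_functor (@connected C).

(** Since a connected object maps into a coproduct through exactly one
    summand, the sieve generated by the coprojections of a coproduct (empty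
    when the coproduct is initial) pulls back to the maximal sieve on every
    connected object, hence covers for [j_* J]; gluing along it shows that a
    [j_* J]-sheaf turns finite coproducts into products. Conversely, if [G]
    turns coproducts into products, then, every object being a coproduct of
    connected ones, a value of [G] on an object is the same thing as a
    compatible family of values on the connected objects over it; so the
    sheaf condition on [F] reduces to the one on connected objects, which is
    the [J]-sheaf condition. *)

From Stdlib Require Import ProofIrrelevance FunctionalExtensionality.
From Stdlib Require Import PropExtensionality IndefiniteDescription.
From mathcomp Require Import all_boot.

Set Implicit Arguments.
Unset Strict Implicit.
Unset Printing Implicit Defensive.

Lemma injective_surjective_bijective (A B : Type) (f : A -> B) :
  injective f -> (forall b, exists a, f a = b) -> bijective f.
Proof.
move=> f_inj f_surj.
exists (fun b => proj1_sig (constructive_indefinite_description _ (f_surj b))) => [a|b].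
- by apply: f_inj; case: constructive_indefinite_description.
- by case: constructive_indefinite_description.
Qed.

Section Sieves.
Variable C : Category.

Lemma sieve_predE (X : C) (S R : sieve_pred X) :
  (forall Y f, S Y f <-> R Y f) -> S = R.
Proof.
move=> SR; do 2![apply: functional_extensionality_dep => ?].
exact: propositional_extensionality.
Qed.

Lemma family_congr (X : C) (S : sieve_pred X) (P : C -> Type)
    (x : forall Y (f : Hom Y X), S Y f -> P Y) Y (f f' : Hom Y X) hf hf' :
  f = f' -> x Y f hf = x Y f' hf'.
Proof. by move=> ef; subst f'; rewrite (proof_irrelevance _ hf hf'). Qed.

Lemma covering_ext (K : forall X : C, sieve_pred X -> Prop) (X : C)
    (S R : sieve_pred X) :
  K X S -> (forall Y f, S Y f <-> R Y f) -> K X R.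
Proof. by move=> KS /sieve_predE <-. Qed.

Definition generated_sieve (X : C) (A : Type) (W : A -> C)
    (s : forall a, Hom (W a) X) : sieve_pred X :=
  fun Z h => exists p : {a : A & Hom Z (W a)}, h = comp (s (projT1 p)) (projT2 p).

Lemma generated_sieve_is_sieve (X : C) (A : Type) (W : A -> C)
    (s : forall a, Hom (W a) X) :
  is_sieve (generated_sieve s).
Proof.
move=> Y Z f g [[a k] /= ->].
by exists (existT _ a (comp k g)); rewrite comp_assoc.
Qed.

Variables (K : forall X : C, sieve_pred X -> Prop) (G : Presheaf C).
Arguments K : clear implicits.
Hypothesis G_sheaf : is_sheaf K G.
Variables (X : C) (A : Type) (W : A -> C) (s : forall a, Hom (W a) X).
Hypothesis K_gen : K X (generated_sieve s).

Lemma sheaf_generated_eq (u v : G X) :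
  (forall a, psh_map G (s a) u = psh_map G (s a) v) -> u = v.
Proof.
move=> uv.
have [a [_ a_uniq]] := @G_sheaf _ _ K_gen (fun Y f _ => psh_map G f u)
  (fun Y f _ Z g _ => psh_map_comp f g u).
rewrite (a_uniq u) // (a_uniq v) // => Z _ [[b k] /= ->].
by rewrite !psh_map_comp uv.
Qed.

Lemma sheaf_generated_glue (y : forall a, G (W a)) :
  (forall Z a a' (k : Hom Z (W a)) (k' : Hom Z (W a')),
     comp (s a) k = comp (s a') k' -> psh_map G k (y a) = psh_map G k' (y a')) ->
  exists z : G X, forall a, psh_map G (s a) z = y a.
Proof.
move=> y_match.
pose val Z (p : {a : A & Hom Z (W a)}) := psh_map G (projT2 p) (y (projT1 p)).
pose x Z h (hh : generated_sieve s h) :=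
  val Z (proj1_sig (constructive_indefinite_description _ hh)).
have x_compat Y f (hf : generated_sieve s f) Z (g : Hom Z Y) hfg :
    x Z (comp f g) hfg = psh_map G g (x Y f hf).
  rewrite /x; case: constructive_indefinite_description => [[a k] efg];
  case: constructive_indefinite_description => [[a' k'] ef] /=.
  rewrite /val /= -psh_map_comp; apply: y_match.
  by rewrite -efg ef comp_assoc.
have [z [z_amalg _]] := @G_sheaf _ _ K_gen _ x_compat.
exists z => a.
have ha : generated_sieve s (s a) by exists (existT _ a (idm _)); rewrite comp_idr.
rewrite (z_amalg _ _ ha) /x; case: constructive_indefinite_description => [[b k] e] /=.
rewrite /val /= -[y a]psh_map_id; apply: y_match.
by rewrite -e comp_idr.
Qed.

End Sieves.

Definition image_sieve {C D : Category} (Fn : Functor C D) {X : C}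
    (S : sieve_pred X) : sieve_pred (Fn X) :=
  generated_sieve (fun a : {W : C & {s : Hom W X | S W s}} =>
                     fmap Fn (proj1_sig (projT2 a))).
Arguments image_sieve {C D} Fn {X} S [Y] _.

Section Connected.
Variable F : Category.
Variables (I : finType) (N : I -> F) (S : F) (iota : forall i, Hom (N i) S).
Hypothesis S_coprod : is_coproduct iota.

Lemma connected_factor (Y : F) (h : Hom Y S) :
  connected Y -> exists p : {i : I & Hom Y (N i)}, h = comp (iota (projT1 p)) (projT2 p).
Proof. by move=> /(_ I N S iota S_coprod) [g _ gK]; exists (g h); rewrite gK. Qed.

Lemma connected_factor_inj (Y : F) (p q : {i : I & Hom Y (N i)}) :
  connected Y ->
  comp (iota (projT1 p)) (projT2 p) = comp (iota (projT1 q)) (projT2 q) -> p = q.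
Proof. by move=> /(_ I N S iota S_coprod) [g gK _] /(can_inj gK). Qed.

End Connected.

Lemma initial_void_coproduct (F : Category) (E : F) (N : void -> F)
    (iota : forall v, Hom (N v) E) :
  is_initial E -> is_coproduct iota.
Proof. by move=> E_init X f; have [h h_uniq] := E_init X; exists h; split=> [[]|?]. Qed.

Section Fcategory.
Variables (F : Category) (HF : is_Fcategory F).

Definition coproduct_separated (G : Presheaf F) : Prop :=
  forall (I : finType) (N : I -> F) (S : F) (iota : forall i, Hom (N i) S),
    is_coproduct iota -> forall u v : G S,
    (forall i, psh_map G (iota i) u = psh_map G (iota i) v) -> u = v.

Definition coproduct_to_product (G : Presheaf F) : Prop :=
  forall (I : finType) (N : I -> F) (S : F) (iota : forall i, Hom (N i) S),
    is_coproduct iota -> bijective (fun x : G S => fun i : I => psh_map G (iota i) x).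

Lemma coproduct_to_product_separated (G : Presheaf F) :
  coproduct_to_product G -> coproduct_separated G.
Proof.
move=> G_prod I N S iota S_coprod u v uv; have [g gK _] := G_prod I N S iota S_coprod.
by apply: (can_inj gK); apply: functional_extensionality_dep.
Qed.

Lemma eq_on_connected (G : Presheaf F) (Y : F) (u v : G Y) :
  coproduct_separated G ->
  (forall Z, connected Z -> forall h : Hom Z Y, psh_map G h u = psh_map G h v) ->
  u = v.
Proof.
case: HF => _ _ /(_ Y) [I [N [T [iota [T_coprod N_conn [phi [psi [_ phi_psi]]]]]]]].
move=> G_sep uv; rewrite -(psh_map_id u) -(psh_map_id v) -phi_psi !psh_map_comp.
congr (psh_map G psi _); apply: (G_sep _ _ _ _ T_coprod) => i.
by rewrite -!psh_map_comp; apply: uv.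
Qed.

Lemma glue_on_connected (G : Presheaf F) (X : F)
    (z : forall Y : F, connected Y -> Hom Y X -> G Y) :
  coproduct_to_product G ->
  (forall Y Z (cY : connected Y) (cZ : connected Z) (h : Hom Y X) (g : Hom Z Y),
     psh_map G g (z Y cY h) = z Z cZ (comp h g)) ->
  exists s : G X, forall Y (cY : connected Y) (h : Hom Y X), psh_map G h s = z Y cY h.
Proof.
case: HF => _ _ /(_ X) [I [N [T [iota [T_coprod N_conn [phi [psi [_ phi_psi]]]]]]]].
move=> G_prod z_compat; have [g _ gK] := G_prod I N T iota T_coprod.
pose t := g (fun i => z (N i) (N_conn i) (comp phi (iota i))).
have t_iota i : psh_map G (iota i) t = z (N i) (N_conn i) (comp phi (iota i)).
  exact: (congr1 (fun y => y i) (gK _)).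
exists (psh_map G psi t) => Y cY h.
have [[i k] /= psi_h] := connected_factor T_coprod (comp psi h) cY.
have h_k : h = comp (comp phi (iota i)) k.
  by rewrite -comp_assoc -psi_h comp_assoc phi_psi comp_idl.
by rewrite -psh_map_comp psi_h psh_map_comp t_iota z_compat -h_k.
Qed.

End Fcategory.

Section Forward.
Variables (F : Category) (HF : is_Fcategory F).
Variables (J : forall X : connSub F, sieve_pred X -> Prop) (G : Presheaf F).
Arguments J : clear implicits.
Hypothesis HJ : is_topology J.
Hypothesis G_sheaf : is_sheaf (pushforward_top (connIncl F) J) G.

Local Notation K X R := (@pushforward_top _ _ (connIncl F) J X R).

Lemma coproduct_sieve_covering (I : finType) (N : I -> F) (S : F)
    (iota : forall i, Hom (N i) S) :
  is_coproduct iota -> K S (generated_sieve iota).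
Proof.
move=> S_coprod; split; first exact: generated_sieve_is_sieve.
move=> Y f; have [[i k] /= f_ik] := connected_factor S_coprod f (proj2_sig Y).
have [_ J_max _ _] := HJ.
apply: (covering_ext (J_max Y)) => Z g; split=> // _.
by exists (existT _ i (comp k g)); rewrite /= f_ik comp_assoc.
Qed.

Lemma image_sieve_covering (X : connSub F) (S : sieve_pred X) :
  J X S -> K (connIncl F X) (image_sieve (connIncl F) S).
Proof.
case: HJ => S_sieve _ J_pullback _ JS; split; first exact: generated_sieve_is_sieve.
move=> Y f; apply: (covering_ext (J_pullback _ _ _ f JS)) => Z g; split.
  move=> hfg; exists (existT _ (existT _ Z (exist _ (comp f g) hfg)) (idm _)).
  by rewrite /= comp_idr.
move=> [[[W [s hs]] k] /= e].
by move: (S_sieve _ _ JS W Z s k hs); rewrite /sieve_pullback /= e.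
Qed.

Lemma sheaf_coproduct_separated : coproduct_separated G.
Proof.
move=> I N S iota S_coprod u v uv.
exact: (sheaf_generated_eq G_sheaf (coproduct_sieve_covering S_coprod) uv).
Qed.

Lemma sheaf_coproduct_to_product : coproduct_to_product G.
Proof.
move=> I N S iota S_coprod; apply: injective_surjective_bijective => [u v uv|y].
  apply: (sheaf_coproduct_separated S_coprod) => i.
  exact: (congr1 (fun y => y i) uv).
have [z z_y] : exists z : G S, forall i, psh_map G (iota i) z = y i.
  apply: (sheaf_generated_glue G_sheaf (coproduct_sieve_covering S_coprod)).
  move=> Z i i' k k' e; apply: (eq_on_connected HF sheaf_coproduct_separated) => W cW c.
  rewrite -!psh_map_comp.
  have := @connected_factor_inj _ _ _ _ _ S_coprod W
    (existT _ i (comp k c)) (existT _ i' (comp k' c)) cW.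
  rewrite /= !comp_assoc e => /(_ erefl) ii'.
  pose val (p : {j : I & Hom W (N j)}) := psh_map G (projT2 p) (y (projT1 p)).
  exact: (congr1 val ii').
by exists z; apply: functional_extensionality_dep.
Qed.

Lemma sheaf_initial_singleton (E : F) :
  is_initial E -> exists x : G E, forall y : G E, y = x.
Proof.
move=> E_init; pose N (v : void) : F := match v with end.
pose iota (v : void) : Hom (N v) E := match v with end.
have [g gK _] := sheaf_coproduct_to_product (initial_void_coproduct iota E_init).
exists (g (fun v => match v with end)) => y; rewrite -[y]gK; congr g.
by apply: functional_extensionality_dep => -[].
Qed.

Lemma sheaf_restrict_sheaf : is_sheaf J (presheaf_restrict (connIncl F) G).
Proof.
move=> X S JS x x_compat.
have S_sieve : is_sieve S by case: HJ => S_sieve _ _ _; apply: S_sieve JS.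
have K_im := image_sieve_covering JS.
have [a a_x] : exists a : G (connIncl F X),
    forall p : {W : connSub F & {s : Hom W X | S W s}},
    psh_map G (proj1_sig (projT2 p)) a = x _ _ (proj2_sig (projT2 p)).
  apply: (sheaf_generated_glue G_sheaf K_im).
  move=> Z [W [s hs]] [W' [s' hs']] k k' /= e.
  apply: (eq_on_connected HF sheaf_coproduct_separated) => V cV c.
  pose Vc : connSub F := exist _ V cV.
  rewrite -!psh_map_comp.
  apply: etrans (esym (x_compat W s hs Vc (comp k c) (S_sieve _ _ _ _ hs))) _.
  apply: etrans (x_compat W' s' hs' Vc (comp k' c) (S_sieve _ _ _ _ hs')).
  by apply: family_congr; rewrite /= !comp_assoc e.
exists a; split=> [Y f hf|b b_x]; first exact: (a_x (existT _ Y (exist _ f hf))).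
apply: (sheaf_generated_eq G_sheaf K_im) => -[W [s hs]] /=.
exact: etrans (b_x _ _ hs) (esym (a_x (existT _ W (exist _ s hs)))).
Qed.

End Forward.

Section Backward.
Variables (F : Category) (HF : is_Fcategory F).
Variables (J : forall X : connSub F, sieve_pred X -> Prop) (G : Presheaf F).
Hypothesis G_restr : is_sheaf J (presheaf_restrict (connIncl F) G).
Hypothesis G_prod : coproduct_to_product G.

Lemma pushforward_sheaf_of_restrict :
  is_sheaf (pushforward_top (connIncl F) J) G.
Proof.
move=> X R [R_sieve R_cov] x x_compat.
have G_sep := coproduct_to_product_separated G_prod.
pose amalgamates Y (h : Hom Y X) (a : G Y) := forall Z (cZ : connected Z)
  (g : Hom Z Y) (hg : R Z (comp h g)), psh_map G g a = x Z _ hg.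
have local Y (cY : connected Y) (h : Hom Y X) :
    exists a, amalgamates Y h a /\ forall b, amalgamates Y h b -> b = a.
  have compat (V : connSub F) (f : Hom (proj1_sig V) Y)
      (hf : R _ (comp h f)) (Z : connSub F) (g : Hom (proj1_sig Z) (proj1_sig V))
      (hfg : R _ (comp h (comp f g))) :
      x _ _ hfg = psh_map G g (x _ _ hf).
    rewrite -(x_compat _ _ hf _ g (R_sieve _ _ _ g hf)).
    by apply: family_congr; rewrite comp_assoc.
  have [a [a_x a_uniq]] := G_restr (R_cov (exist _ Y cY) h) compat.
  exists a; split=> [Z cZ|b b_x]; first exact: (a_x (exist _ Z cZ)).
  by apply: a_uniq => -[Z cZ]; apply: b_x.
pose z Y cY h := proj1_sig (constructive_indefinite_description _ (local Y cY h)).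
have z_spec Y cY h : amalgamates Y h (z Y cY h) /\
    forall b, amalgamates Y h b -> b = z Y cY h.
  exact: proj2_sig (constructive_indefinite_description _ (local Y cY h)).
have z_compat Y Z (cY : connected Y) (cZ : connected Z) (h : Hom Y X) (g : Hom Z Y) :
    psh_map G g (z Y cY h) = z Z cZ (comp h g).
  apply: (z_spec Z cZ (comp h g)).2 => W cW k hk.
  have hk' : R W (comp h (comp g k)) by rewrite comp_assoc.
  rewrite -psh_map_comp ((z_spec Y cY h).1 W cW _ hk').
  by apply: family_congr; rewrite comp_assoc.
have z_x Y cY h (hh : R Y h) : z Y cY h = x Y h hh.
  have hh' : R Y (comp h (idm Y)) by rewrite comp_idr.
  rewrite -[z _ _ _]psh_map_id ((z_spec Y cY h).1 Y cY _ hh').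
  by apply: family_congr; rewrite comp_idr.
have [s s_z] := glue_on_connected HF G_prod z_compat.
exists s; split=> [Y f hf|b b_x]; apply: (eq_on_connected HF G_sep) => Z cZ c.
  rewrite -psh_map_comp s_z -(x_compat _ _ hf _ c (R_sieve _ _ _ c hf)).
  exact: z_x.
rewrite s_z; apply: (z_spec Z cZ c).2 => W cW g hg.
by rewrite -psh_map_comp; apply: b_x.
Qed.

End Backward.

Theorem mainTheorem12 (F : Category) (HF : is_Fcategory F)
  (J : forall X : connSub F, sieve_pred X -> Prop) (HJ : is_topology J)
  (G : Presheaf F) :
  is_sheaf (pushforward_top (connIncl F) J) G <->
  [/\ is_sheaf J (presheaf_restrict (connIncl F) G),
      (forall E : F, is_initial E -> exists x : G E, forall y : G E, y = x) &
      (forall (I : finType) (N : I -> F) (S : F) (iota : forall i, Hom (N i) S),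
         is_coproduct iota ->
         bijective (fun x : G S => fun i : I => psh_map G (iota i) x))].
Proof.
split=> [G_sheaf|[G_restr _ G_prod]].
  split; [exact: (@sheaf_restrict_sheaf F HF J G HJ G_sheaf)
         | exact: (@sheaf_initial_singleton F HF J G HJ G_sheaf)
         | exact: (@sheaf_coproduct_to_product F HF J G HJ G_sheaf)].
(* Condition (b) is the empty case of (c). *)
exact: (@pushforward_sheaf_of_restrict F HF J G G_restr G_prod).
Qed.
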